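(* $\mathtt{incl}$-$\mathtt{ESO}$-$\mathtt{HORN}=\mathtt{Trellis}$.
   Context: Fix a finite alphabet $\Sigma$. A nonempty word $w=w_1\cdots w_n$ is represented by the structure $\langle w\rangle=([1,n];(Q_s)_{s\in\Sigma},\mathtt{min},\mathtt{max},\mathtt{suc},\mathtt{pred})$ with $Q_s(i)\iff w_i=s$, $\mathtt{min}(i)\iff i=1$, $\mathtt{max}(i)\iff i=n$, $\mathtt{suc}(i)=\min(i+1,n)$, $\mathtt{pred}(i)=\max(i-1,1)$. For an integer $a$, $x+a$ denotes $\mathtt{suc}^a(x)$ if $a\ge0$ and $\mathtt{pred}^{-a}(x)$ if $a<0$; $y-b=\mathtt{pred}^b(y)$. An inclusion Horn formula is $\Phi=\exists\mathbf{R}\forall x\forall y\,\psi(x,y)$, $\mathbf{R}$ a finite set of binary relation symbols, $\psi$ a conjunction of Horn clauses over the signature $\{(Q_s)_{s\in\Sigma},\mathtt{min},\mathtt{max},\mathtt{suc},\mathtt{pred}\}\cup\mathbf{R}\cup\{=,\le,<\}$, each of the form $x\le y\wedge\delta_1\wedge\cdots\wedge\delta_r\to\delta_0$ with $\delta_0$ an atom $R(x,y)$ ($R\in\mathbf{R}$) or $\bot$, and each $\delta_i$ one of: $U(x+a)$, $\neg U(x+a)$, $U(y+a)$, $\neg U(y+a)$ for $U\in\{(Q_s)_{s\in\Sigma},\mathtt{min},\mathtt{max}\}$ and $a\in\mathbb Z$; $x=y$ or $x<y$; a conjunction $S(x+a,y-b)\wedge x+a\le y-b$ with $S\in\mathbf{R}$,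 integers $a,b\ge0$. $\mathtt{incl}$-$\mathtt{ESO}$-$\mathtt{HORN}$ is the class of languages $\{w\in\Sigma^+:\langle w\rangle\models\Phi\}$ for such $\Phi$. A one-way cellular automaton (OCA) is $(Q,\Sigma,Q_{accept},\mathcal N,\delta)$ with finite $Q\supseteq\Sigma$, $Q_{accept}\subseteq Q$, $\mathcal N=\{-1,0\}$, $\delta:Q^2\to Q$. On input $w=w_1\cdots w_n$ it works on cells $1,\dots,n$ (cells outside are permanently in a state $\sharp$), with parallel input $\langle c,1\rangle=w_c$ and $\langle c,t\rangle=\delta(\langle c-1,t-1\rangle,\langle c,t-1\rangle)$ for $t>1$, where $\langle c,t\rangle$ is the state of cell $c$ at time $t$. $\mathtt{Trellis}$ is the class of languages $L\subseteq\Sigma^+$ accepted in real time by such an automaton, i.e. such that $w\in L\iff\langle n,n\rangle\in Q_{accept}$ for every $w$ of length $n$ (equivalently, languages accepted by trellis automata). *)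

From Stdlib Require List.
From mathcomp Require Import all_boot all_order all_algebra.
Set Implicit Arguments. Unset Strict Implicit. Unset Printing Implicit Defensive.

(* Words are sequences over a finite alphabet [Sigma]; positions are 1..n.
   A language is a predicate on words; languages of the paper are subsets of
   Sigma^+ (the empty word never belongs to them). *)
Definition language (Sigma : finType) := seq Sigma -> Prop.

Section Word.
Variables (Sigma : finType) (w : seq Sigma).
Let n := size w.

Definition in_dom (i : nat) : bool := (1 <= i <= n)%N.
Definition suc (i : nat) : nat := minn i.+1 n.
Definition prd (i : nat) : nat := maxn i.-1 1.

Definition shift (i : nat) (a : int) : nat :=
  match a with
  | Posz k => iter k suc i
  | Negz k => iter k.+1 prd i   (* Negz k = -(k+1) *)
  end.
Definition shiftm (i : nat) (b : nat) : nat := iter b prd i.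
End Word.

Inductive upred (Sigma : finType) :=
| UQ of Sigma
| Umin
| Umax.

Definition upred_sat (Sigma : finType) (w : seq Sigma) (U : upred Sigma) (i : nat) : bool :=
  match U with
  | UQ s => onth w i.-1 == Some s
  | Umin => i == 1%N
  | Umax => i == size w
  end.

(* Hypothesis literals delta_i of an inclusion Horn clause, over relation
   symbols 'I_k. The bool is the polarity (true = positive literal). *)
Inductive hlit (Sigma : finType) (k : nat) :=
| LX of upred Sigma & int & bool
| LY of upred Sigma & int & bool
| LEq
| LLt
| LRel of 'I_k & nat & nat.           (* S(x+a, y-b) /\ x+a <= y-b, a,b >= 0 *)

(* A Horn clause  x <= y /\ delta_1 /\ ... /\ delta_r -> delta_0 ;
   head None = bottom, head (Some R) = R(x,y). *)
Record hclause (Sigma : finType) (k : nat) := HClause {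
  hyps : seq (hlit Sigma k);
  head : option 'I_k }.

(* An inclusion Horn formula  exists R forall x forall y psi(x,y),
   with R = {R_0, ..., R_{k-1}} binary relation symbols. *)
Record incl_horn (Sigma : finType) := InclHorn {
  nrel : nat;
  clauses : seq (hclause Sigma nrel) }.

Section Semantics.
Variables (Sigma : finType) (w : seq Sigma) (k : nat)
          (R : 'I_k -> nat -> nat -> Prop).

Definition pol (b : bool) (P : bool) : Prop := if b then P else ~~ P.

Definition hlit_sat (x y : nat) (l : hlit Sigma k) : Prop :=
  match l with
  | LX U a b => pol b (upred_sat w U (shift w x a))
  | LY U a b => pol b (upred_sat w U (shift w y a))
  | LEq => x = y
  | LLt => (x < y)%N
  | LRel Rs a b =>
      R Rs (shift w x (Posz a)) (shiftm y b) /\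
      (shift w x (Posz a) <= shiftm y b)%N
  end.

Definition hclause_sat (x y : nat) (c : hclause Sigma k) : Prop :=
  (x <= y)%N -> (forall l, List.In l (hyps c) -> hlit_sat x y l) ->
  match head c with
  | None => False
  | Some Rs => R Rs x y
  end.
End Semantics.

Definition models (Sigma : finType) (w : seq Sigma) (Phi : incl_horn Sigma) : Prop :=
  exists R : 'I_(nrel Phi) -> nat -> nat -> Prop,
    forall x y, in_dom w x -> in_dom w y ->
      forall c, List.In c (clauses Phi) -> hclause_sat w R x y c.

Definition inclESOHORN (Sigma : finType) (L : language Sigma) : Prop :=
  ~ L [::] /\
  exists Phi : incl_horn Sigma, forall w, w <> [::] -> (L w <-> models w Phi).

Record OCA (Sigma : finType) := MkOCA {
  state : finType;
  inp : Sigma -> state;            (* Q contains Sigma *)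
  inp_inj : injective inp;
  accepting : pred state;
  sharp : state;                   (* permanent state of cells outside [1,n] *)
  delta : state -> state -> state  (* neighbourhood {-1, 0} *)
}.

Section OCASem.
Variables (Sigma : finType) (A : OCA Sigma) (w : seq Sigma).

(* cfg t c = <c, t+1> *)
Fixpoint cfg (t : nat) (c : nat) : state A :=
  match t with
  | 0 => if in_dom w c then
           match onth w c.-1 with Some s => @inp _ A s | None => @sharp _ A end
         else @sharp _ A
  | t'.+1 => if in_dom w c then @delta _ A (cfg t' c.-1) (cfg t' c) else @sharp _ A
  end.

(* accepted in real time: <n, n> in Q_accept *)
Definition oca_accepts : Prop := @accepting _ A (cfg (size w).-1 (size w)).
End OCASem.

Definition Trellis (Sigma : finType) (L : language Sigma) : Prop :=
  ~ L [::] /\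
  exists A : OCA Sigma, forall w, w <> [::] -> (L w <-> oca_accepts A w).

(* Trellis automata are Horn-definable: a relation [R_q(x, y)] for each state
   [q], meaning that the automaton run on the factor [w_x ... w_y] ends in [q],
   is defined by one clause per input letter and one per transition, and
   rejection is a goal clause at [(min, max)].

   Conversely, a word satisfies an inclusion Horn formula iff no goal clause
   fires in the least model of the other clauses. Relational hypotheses
   [S(x + a, y - b)] with [x + a <= y - b] only involve pairs inside [[x, y]],
   and unary ones look at most [K] positions away, so the least-model facts at
   pairs inside a factor [v] only depend on [v] and on [K + 1] letters of
   context on each side. Hence the profile of [v] (its first and last [2K + 3]
   letters and, for all short contexts, the least-model facts near the ends of
   [v] and whether a goal clause fires inside [v]) ranges over a finite set, and
   the profile of [s m z] is determined by those of [s m] and [m z]. A trellis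
   automaton whose states are profiles computes the profile of its input, which
   decides membership. *)

From Pilot Require Import Defs.
From mathcomp Require Import all_boot all_order all_algebra.
From mathcomp Require Import zify.
From Stdlib Require Import ClassicalEpsilon.
Set Implicit Arguments. Unset Strict Implicit. Unset Printing Implicit Defensive.

Lemma eqn_iff (a b c d : nat) : (a = b <-> c = d) -> (a == b) = (c == d).
Proof. by move=> h; apply/eqP/eqP => /h. Qed.

Lemma leq_foldr_maxn (A : Type) (f : A -> nat) (s : seq A) x :
  List.In x s -> f x <= foldr (fun y m => maxn (f y) m) 0 s.
Proof. by elim: s => //= y s IH [->|/IH]; lia. Qed.

Lemma In_mem (T : eqType) (x : T) (s : seq T) : x \in s -> List.In x s.
Proof. by elim: s => //= y s IH; rewrite inE => /orP[/eqP->|/IH]; [left|right]. Qed.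

Lemma onth_take (T : Type) (s : seq T) m i :
  onth (take m s) i = if i < m then onth s i else None.
Proof.
rewrite !onthE map_take; case: ltnP => le_mi; first by rewrite nth_take.
by rewrite nth_default // size_take_min size_map; lia.
Qed.

Lemma onth_drop (T : Type) (s : seq T) d i : onth (drop d s) i = onth s (d + i).
Proof. by rewrite !onthE map_drop nth_drop. Qed.

Definition lastn (T : Type) n (s : seq T) := drop (size s - n) s.

Lemma size_lastn (T : Type) n (s : seq T) : size (lastn n s) = minn n (size s).
Proof. by rewrite size_drop; lia. Qed.

Lemma take_eq_short (T : Type) n (a b : seq T) :
  take n a = take n b -> size a < n -> a = b.
Proof.
move=> same_take short_a; have := congr1 size same_take.
rewrite !size_take_min => same_size.
by move: same_take; rewrite !take_oversize //; lia.
Qed.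

Lemma lastn_oversize (T : Type) n (s : seq T) : size s <= n -> lastn n s = s.
Proof. by move=> le_sn; rewrite /lastn (_ : size s - n = 0) ?drop0 //; lia. Qed.

Lemma take_cons_rcons (T : Type) n (s : T) v z :
  n <= (size v).+1 -> take n (s :: rcons v z) = take n (s :: v).
Proof. by move=> le_n; rewrite -cats1 -cat_cons takel_cat. Qed.

Lemma lastn_cons_rcons (T : Type) n (s : T) v z :
  n <= (size v).+1 -> lastn n (s :: rcons v z) = lastn n (rcons v z).
Proof.
move=> le_n; rewrite /lastn /= size_rcons.
by rewrite (_ : (size v).+2 - n = ((size v).+1 - n).+1) //; lia.
Qed.

Definition factor (T : Type) (w : seq T) i j := drop i (take j w).

Lemma size_factor (T : Type) (w : seq T) i j : j <= size w -> size (factor w i j) = j - i.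
Proof. by move=> le_jw; rewrite size_drop size_take_min; lia. Qed.

Lemma factor_single (T : Type) (w : seq T) i s : onth w i = Some s -> factor w i i.+1 = [:: s].
Proof.
by rewrite /factor; elim: w i => [|x w IH] [|i] //= => [[->]|/IH]; rewrite ?take0.
Qed.

Lemma factor_belast (T : Type) (w : seq T) i j :
  i < j -> factor w i j.-1 = take (j - i).-1 (factor w i j).
Proof.
move=> lt_ij; rewrite /factor take_drop take_takel; last by lia.
by congr (drop _ (take _ _)); lia.
Qed.

Lemma factor_behead (T : Type) (w : seq T) i j : factor w i.+1 j = behead (factor w i j).
Proof. by rewrite /factor -drop1 drop_drop add1n. Qed.

Lemma insub_bseqK (T : Type) n (s : seq T) : size s <= n -> insub_bseq n s = s :> seq T.
Proof. by move=> le_sn; rewrite /insub_bseq insubdK. Qed.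

Definition asbool (P : Prop) : bool := if excluded_middle_informative P then true else false.

Lemma asboolP (P : Prop) : reflect P (asbool P).
Proof. by rewrite /asbool; case: excluded_middle_informative => p; constructor. Qed.

Lemma asbool_eq (P Q : Prop) : asbool P = asbool Q <-> (P <-> Q).
Proof.
rewrite /asbool; case: excluded_middle_informative => p;
  case: excluded_middle_informative => q; split=> // PQ; exfalso; tauto.
Qed.

Lemma iter_prd i m : 0 < i -> iter m prd i = maxn (i - m) 1.
Proof. by move=> i_gt0; elim: m => [|m IH] /=; rewrite ?IH /prd; lia. Qed.

Lemma shift_Posz (Sigma : finType) (w : seq Sigma) i k :
  i <= size w -> shift w i (Posz k) = minn (i + k) (size w).
Proof. by move=> le_iw; rewrite /shift; elim: k => [|k IH]; rewrite ?iterS ?IH /suc /=; lia. Qed.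

Lemma shift_Negz (Sigma : finType) (w : seq Sigma) i k :
  0 < i -> shift w i (Negz k) = maxn (i - k.+1) 1.
Proof. exact: iter_prd. Qed.

Lemma shiftmE i b : 0 < i -> shiftm i b = maxn (i - b) 1.
Proof. exact: iter_prd. Qed.

Lemma upred_sat_eq (Sigma : finType) (w w' : seq Sigma) U j j' :
  onth w j.-1 = onth w' j'.-1 -> (j = 1 <-> j' = 1) -> (j = size w <-> j' = size w') ->
  upred_sat w U j = upred_sat w' U j'.
Proof. by move=> Ej /eqn_iff E1 /eqn_iff En; case: U => //= s; rewrite Ej. Qed.

Definition pair_in (T : Type) (w : seq T) x y := (0 < x <= y) && (y <= size w).

Lemma pair_inP (Sigma : finType) (w : seq Sigma) x y :
  pair_in w x y <-> [/\ in_dom w x, in_dom w y & x <= y].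
Proof. by rewrite /pair_in /in_dom; split=> [h|[]]; first split; lia. Qed.

(** * Least models and their transfer between words *)

Section LeastModel.
Variables (Sigma : finType) (Phi : incl_horn Sigma).
Local Notation k := (nrel Phi).

Definition interp := 'I_k -> nat -> nat -> Prop.

Definition closed_interp (w : seq Sigma) (R : interp) :=
  forall c r x y, List.In c (clauses Phi) -> Defs.head c = Some r ->
  in_dom w x -> in_dom w y -> x <= y ->
  (forall l, List.In l (hyps c) -> hlit_sat w R x y l) -> R r x y.

Definition least_interp (w : seq Sigma) : interp :=
  fun r x y => forall R, closed_interp w R -> R r x y.

Definition goal_fires (w : seq Sigma) x y := exists2 c, List.In c (clauses Phi) &
  Defs.head c = None /\ forall l, List.In l (hyps c) -> hlit_sat w (least_interp w) x y l.

Lemma hlit_sat_mono (w : seq Sigma) (R R' : interp) x y l :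
  (forall r a b, R r a b -> R' r a b) -> hlit_sat w R x y l -> hlit_sat w R' x y l.
Proof. by move=> RR'; case: l => //= s a b [Rab le_ab]; split => //; apply: RR'. Qed.

Lemma least_interp_closed (w : seq Sigma) : closed_interp w (least_interp w).
Proof.
move=> c r x y c_in c_r x_in y_in le_xy hyps_sat R R_closed.
apply: (R_closed c) => // l l_in.
by apply: hlit_sat_mono (hyps_sat _ l_in) => r' a b; apply.
Qed.

Lemma models_least_interp (w : seq Sigma) :
  models w Phi <-> forall x y, pair_in w x y -> ~ goal_fires w x y.
Proof.
split=> [[R R_sat] x y /pair_inP[x_in y_in le_xy] [c c_in [c_bot hyps_sat]]|no_fire].
  have R_closed : closed_interp w R.
    move=> c' r x' y' c'_in c'_r x'_in y'_in le_xy' hyps'_sat.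
    by have := R_sat x' y' x'_in y'_in c' c'_in le_xy' hyps'_sat; rewrite c'_r.
  have := R_sat x y x_in y_in c c_in le_xy; rewrite c_bot; apply=> l l_in.
  by apply: hlit_sat_mono (hyps_sat _ l_in) => r a b; apply.
exists (least_interp w) => x y x_in y_in c c_in le_xy hyps_sat.
case c_head: (Defs.head c) => [r|]; first exact: (least_interp_closed c_in c_head).
by apply: (no_fire x y); [apply/pair_inP | exists c].
Qed.

Definition hlit_offset (l : hlit Sigma k) : nat :=
  match l with
  | LX _ a _ | LY _ a _ => absz a
  | LRel _ a b => maxn a b
  | _ => 0
  end.

Definition offset_bound K := forall c l,
  List.In c (clauses Phi) -> List.In l (hyps c) -> hlit_offset l <= K.

Lemma offset_bound_exists : exists K, offset_bound K.
Proof.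
pose hyps_offset (c : hclause Sigma k) := foldr (fun l m => maxn (hlit_offset l) m) 0 (hyps c).
exists (foldr (fun c m => maxn (hyps_offset c) m) 0 (clauses Phi)) => c l c_in l_in.
have le_c := leq_foldr_maxn hyps_offset c_in.
have le_l : hlit_offset l <= hyps_offset c by apply: leq_foldr_maxn.
exact: leq_trans le_l le_c.
Qed.

(* The hypotheses of offset at most [K] evaluated at [(x, y)] in [w] and at
   [(x', y')] in [w'] agree, provided the relations agree on [Q]-related pairs. *)
Record matching K (w w' : seq Sigma) x y x' y' (Q : nat -> nat -> nat -> nat -> Prop) :
    Prop := Matching {
  matching_x : forall U a, absz a <= K ->
    upred_sat w U (shift w x a) = upred_sat w' U (shift w' x' a);
  matching_y : forall U a, absz a <= K ->
    upred_sat w U (shift w y a) = upred_sat w' U (shift w' y' a);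
  matching_eq : x = y <-> x' = y';
  matching_lt : (x < y) = (x' < y');
  matching_le : forall a b, a <= K -> b <= K ->
    (shift w x (Posz a) <= shiftm y b) = (shift w' x' (Posz a) <= shiftm y' b);
  matching_rel : forall a b, a <= K -> b <= K -> shift w x (Posz a) <= shiftm y b ->
    Q (shift w x (Posz a)) (shiftm y b) (shift w' x' (Posz a)) (shiftm y' b) }.

Lemma hlit_sat_matching K (w w' : seq Sigma) (R R' : interp) x y x' y' Q l :
  matching K w w' x y x' y' Q -> (forall r a b a' b', Q a b a' b' -> R r a b -> R' r a' b') ->
  hlit_offset l <= K -> hlit_sat w R x y l -> hlit_sat w' R' x' y' l.
Proof.
case=> Mx My Meq Mlt Mle Mrel QRR'.
case: l => /= [U a p|U a p||| r a b] le_lK.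
- by rewrite Mx.
- by rewrite My.
- by move/Meq.
- by rewrite Mlt.
move: le_lK; rewrite geq_max => /andP[le_aK le_bK] [Rab le_ab].
by split; [apply: QRR' (Mrel _ _ le_aK le_bK le_ab) Rab | rewrite -Mle].
Qed.

Lemma matching_sym K (w w' : seq Sigma) x y x' y' Q :
  matching K w w' x y x' y' Q ->
  matching K w' w x' y' x y (fun a b a' b' => Q a' b' a b).
Proof.
case=> Mx My Meq Mlt Mle Mrel; split.
- by move=> U a le_aK; rewrite Mx.
- by move=> U a le_aK; rewrite My.
- by rewrite Meq.
- by rewrite Mlt.
- by move=> a b le_aK le_bK; rewrite Mle.
- by move=> a b le_aK le_bK; rewrite -Mle //; apply: Mrel.
Qed.

Lemma matching_mono K (w w' : seq Sigma) x y x' y' (Q Q' : nat -> nat -> nat -> nat -> Prop) :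
  (forall a b a' b', Q a b a' b' -> Q' a b a' b') ->
  matching K w w' x y x' y' Q -> matching K w w' x y x' y' Q'.
Proof. by move=> QQ' [Mx My Meq Mlt Mle Mrel]; split=> // a b *; apply/QQ'/Mrel. Qed.

Definition agree (w w' : seq Sigma) a b a' b' :=
  forall r, least_interp w r a b <-> least_interp w' r a' b'.

(* A bisimulation up to [agree]: matching only has to hold at the pairs related
   by [G], and the relational hypotheses may land either in [G] or in pairs
   already known to agree. *)
Definition bisimulation K (w w' : seq Sigma) (G : nat -> nat -> nat -> nat -> Prop) :=
  forall x y x' y', G x y x' y' ->
  [/\ pair_in w x y, pair_in w' x' y' &
      matching K w w' x y x' y' (fun a b a' b' => G a b a' b' \/ agree w w' a b a' b')].

Section Transfer.
Variable K : nat.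
Hypothesis bound_K : offset_bound K.

Lemma bisimulation_sym (w w' : seq Sigma) G : bisimulation K w w' G ->
  bisimulation K w' w (fun a b a' b' => G a' b' a b).
Proof.
move=> bisim x y x' y' /bisim[in_xy' in_xy M]; split=> //.
apply: matching_mono (matching_sym M) => a b a' b' [Gab|agr]; [by left|right].
by move=> r; rewrite agr.
Qed.

Lemma least_interp_sim (w w' : seq Sigma) G : bisimulation K w w' G ->
  forall r x y x' y', G x y x' y' -> least_interp w r x y -> least_interp w' r x' y'.
Proof.
move=> bisim r x y x' y' Gxy least_xy.
pose P : interp := fun s a b =>
  least_interp w s a b /\ forall a' b', G a b a' b' -> least_interp w' s a' b'.
suff [] : P r x y by move=> _; apply.
apply: least_xy => c s a b c_in c_s a_in b_in le_ab hyps_sat; split.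
  apply: (least_interp_closed c_in c_s a_in b_in le_ab) => l l_in.
  by apply: hlit_sat_mono (hyps_sat _ l_in) => ? ? ? [].
move=> a' b' /bisim[_ /pair_inP[a'_in b'_in le_ab'] M].
apply: (least_interp_closed c_in c_s a'_in b'_in le_ab') => l l_in.
apply: (hlit_sat_matching M _ (bound_K c_in l_in) (hyps_sat _ l_in)).
by move=> s' a1 b1 a1' b1' [G1|agr] [least1 P1]; [apply: P1 | apply/agr].
Qed.

Lemma least_interp_bisim (w w' : seq Sigma) G x y x' y' :
  bisimulation K w w' G -> G x y x' y' -> agree w w' x y x' y'.
Proof.
move=> bisim Gxy r; split; first exact: least_interp_sim Gxy.
exact: least_interp_sim (bisimulation_sym bisim) _ _ _ _ _ Gxy.
Qed.

Lemma goal_fires_matching (w w' : seq Sigma) x y x' y' Q :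
  matching K w w' x y x' y' Q -> (forall a b a' b', Q a b a' b' -> agree w w' a b a' b') ->
  goal_fires w x y <-> goal_fires w' x' y'.
Proof.
move=> M QA; split=> -[c c_in [c_bot hyps_sat]]; exists c => //; split=> // l l_in.
  apply: (hlit_sat_matching M _ (bound_K c_in l_in) (hyps_sat _ l_in)).
  by move=> r a b a' b' /QA agr /agr.
apply: (hlit_sat_matching (matching_sym M) _ (bound_K c_in l_in) (hyps_sat _ l_in)).
by move=> r a b a' b' /QA agr /agr.
Qed.

End Transfer.
End LeastModel.

(** * Locality *)

Section Windows.
Variables (Sigma : finType) (Phi : incl_horn Sigma) (K : nat).
Hypothesis bound_K : offset_bound Phi K.
Local Notation agree := (agree Phi).
Local Notation goal_fires := (goal_fires Phi).

Section Take.
Variables (w : seq Sigma) (m : nat).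

Let size_take_m : size (take m w) = minn m (size w) := size_take_min m w.

Lemma shift_take z (a : int) : 0 < z <= size w -> z + K < m -> absz a <= K ->
  shift (take m w) z a = shift w z a /\
  forall U, upred_sat (take m w) U (shift w z a) = upred_sat w U (shift w z a).
Proof.
move=> z_in lt_zm; case: a => [a|a] le_aK; rewrite /= in le_aK.
  rewrite !shift_Posz ?size_take_m; try lia.
  split; first lia.
  move=> U; apply: upred_sat_eq => //; last by rewrite size_take_m; lia.
  by rewrite onth_take ifT //; lia.
rewrite !shift_Negz; try lia.
split=> // U; apply: upred_sat_eq => //; last by rewrite size_take_m; lia.
by rewrite onth_take ifT //; lia.
Qed.

Definition take_rel x y x' y' := [/\ x' = x, y' = y, pair_in w x y & y + K < m].

Lemma matching_take x y : pair_in w x y -> y + K < m ->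
  matching K w (take m w) x y x y take_rel.
Proof.
rewrite /pair_in => in_xy lt_ym.
have x_in : 0 < x <= size w by lia.
have y_in : 0 < y <= size w by lia.
have lt_xm : x + K < m by lia.
split=> // [U a le_aK|U a le_aK|a b le_aK _|a b le_aK le_bK].
- by have [-> ->] := shift_take x_in lt_xm le_aK.
- by have [-> ->] := shift_take y_in lt_ym le_aK.
- by have [-> _] := @shift_take x a x_in lt_xm le_aK.
have [-> _] := @shift_take x a x_in lt_xm le_aK.
by rewrite shift_Posz ?shiftmE; try lia; split; rewrite /pair_in; lia.
Qed.

Lemma bisimulation_take : bisimulation Phi K w (take m w) take_rel.
Proof.
move=> x y _ _ [-> -> in_xy lt_ym]; split=> //.
  by move: in_xy; rewrite /pair_in size_take_m; lia.
by apply: matching_mono (matching_take in_xy lt_ym) => *; left.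
Qed.

Lemma agree_take x y : pair_in w x y -> y + K < m -> agree w (take m w) x y x y.
Proof. by move=> in_xy lt_ym; apply: (least_interp_bisim bound_K bisimulation_take). Qed.

Lemma goal_fires_take x y : pair_in w x y -> y + K < m ->
  goal_fires w x y <-> goal_fires (take m w) x y.
Proof.
move=> in_xy lt_ym; apply: (goal_fires_matching bound_K (matching_take in_xy lt_ym)).
by move=> a b _ _ [-> -> in_ab lt_bm]; apply: agree_take.
Qed.

End Take.

Section Drop.
Variables (w : seq Sigma) (d : nat).

Lemma shift_drop z (a : int) : d + K + 1 < z <= size w -> absz a <= K ->
  shift (drop d w) (z - d) a = shift w z a - d /\ d + 1 < shift w z a /\
  forall U, upred_sat (drop d w) U (shift w z a - d) = upred_sat w U (shift w z a).
Proof.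
move=> z_in; have size_drop_d := size_drop d w.
case: a => [a|a] le_aK; rewrite /= in le_aK.
  rewrite !shift_Posz ?size_drop_d; try lia.
  do 2 (split; first lia).
  move=> U; apply: upred_sat_eq; rewrite ?onth_drop ?size_drop_d; try lia.
  by congr onth; lia.
rewrite !shift_Negz; try lia.
do 2 (split; first lia).
move=> U; apply: upred_sat_eq; rewrite ?onth_drop ?size_drop_d; try lia.
by congr onth; lia.
Qed.

Definition drop_rel x y x' y' := [/\ x' = x - d, y' = y - d, pair_in w x y & d + K + 1 < x].

Lemma matching_drop x y : pair_in w x y -> d + K + 1 < x ->
  matching K w (drop d w) x y (x - d) (y - d) drop_rel.
Proof.
rewrite /pair_in => in_xy lt_dx.
have x_in : d + K + 1 < x <= size w by lia.
have y_in : d + K + 1 < y <= size w by lia.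
split=> [U a le_aK|U a le_aK|||a b le_aK _|a b le_aK le_bK]; try lia.
- by have [-> [_ ->]] := shift_drop x_in le_aK.
- by have [-> [_ ->]] := shift_drop y_in le_aK.
- have [-> [lt_dx' _]] := @shift_drop x a x_in le_aK.
  by move: lt_dx'; rewrite shift_Posz ?shiftmE; lia.
have [-> [lt_dx' _]] := @shift_drop x a x_in le_aK.
by move: lt_dx'; rewrite shift_Posz ?shiftmE; try lia; split; rewrite /pair_in; lia.
Qed.

Lemma bisimulation_drop : bisimulation Phi K w (drop d w) drop_rel.
Proof.
move=> x y _ _ [-> -> in_xy lt_dx]; split=> //.
  by move: in_xy; rewrite /pair_in size_drop; lia.
by apply: matching_mono (matching_drop in_xy lt_dx) => *; left.
Qed.

Lemma agree_drop x y : pair_in w x y -> d + K + 1 < x ->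
  agree w (drop d w) x y (x - d) (y - d).
Proof. by move=> in_xy lt_dx; apply: (least_interp_bisim bound_K bisimulation_drop). Qed.

Lemma goal_fires_drop x y : pair_in w x y -> d + K + 1 < x ->
  goal_fires w x y <-> goal_fires (drop d w) (x - d) (y - d).
Proof.
move=> in_xy lt_dx; apply: (goal_fires_matching bound_K (matching_drop in_xy lt_dx)).
by move=> a b _ _ [-> -> in_ab lt_da]; apply: agree_drop.
Qed.

End Drop.
End Windows.

Section Contexts.
Variables (Sigma : finType) (Phi : incl_horn Sigma) (K : nat).
Hypothesis bound_K : offset_bound Phi K.
Local Notation agree := (agree Phi).
Local Notation goal_fires := (goal_fires Phi).
Local Notation least_interp := (@least_interp _ Phi).
(* Contexts of length [K + 1]: the unary lookups from a pair inside the factor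
   stay strictly inside the window, so [min] and [max] are not faked. *)
Local Notation N := K.+1.

Definition ctx (lc v rc : seq Sigma) := lc ++ v ++ rc.

Lemma size_ctx lc v rc : size (ctx lc v rc) = size lc + size v + size rc.
Proof. by rewrite /ctx !size_cat addnA. Qed.

Definition inside (lc v : seq Sigma) x y := (size lc < x <= y) && (y <= size lc + size v).

Definition edge_fact (lc v rc : seq Sigma) a b r := a + b < size v /\
  least_interp (ctx lc v rc) r (size lc + 1 + a) (size lc + size v - b).

Definition violated_inside (lc v rc : seq Sigma) :=
  exists x y, inside lc v x y /\ goal_fires (ctx lc v rc) x y.

Lemma ctx_rcons lc v z rc :
  ctx lc v (take N (z :: rc)) = take (size lc + size v + N) (ctx lc (rcons v z) rc).
Proof.
rewrite /ctx -cats1 -catA cat1s take_cat ifF; last by lia.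
rewrite take_cat ifF; last by lia.
by congr (_ ++ (_ ++ take _ _)); lia.
Qed.

Lemma ctx_cons lc s t rc :
  ctx (lastn N (rcons lc s)) t rc = drop (size lc + 1 - N) (ctx lc (s :: t) rc).
Proof.
rewrite /ctx /lastn size_rcons -addn1 cat_cons -cat_rcons.
by rewrite drop_cat size_rcons ifT; [rewrite addn1 | lia].
Qed.

Lemma pair_in_ctx lc v rc x y : inside lc v x y -> pair_in (ctx lc v rc) x y.
Proof. by rewrite /inside /pair_in size_ctx; lia. Qed.

Section Rcons.
Variables (lc v : seq Sigma) (z : Sigma) (rc : seq Sigma) (x y : nat).
Hypothesis xy_inside : inside lc v x y.

Let pair_in_take : pair_in (ctx lc (rcons v z) rc) x y.
Proof. by apply: pair_in_ctx; move: xy_inside; rewrite /inside size_rcons; lia. Qed.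

Let lt_y_take : y + K < size lc + size v + N.
Proof. by move: xy_inside; rewrite /inside; lia. Qed.

Lemma agree_rcons :
  agree (ctx lc (rcons v z) rc) (ctx lc v (take N (z :: rc))) x y x y.
Proof. by rewrite ctx_rcons; apply: agree_take pair_in_take lt_y_take. Qed.

Lemma goal_fires_rcons :
  goal_fires (ctx lc (rcons v z) rc) x y <-> goal_fires (ctx lc v (take N (z :: rc))) x y.
Proof. by rewrite ctx_rcons; apply: goal_fires_take pair_in_take lt_y_take. Qed.

End Rcons.

Section Cons.
Variables (lc : seq Sigma) (s : Sigma) (t rc : seq Sigma) (x y : nat).
Hypothesis xy_inside : inside (rcons lc s) t x y.
Let d := size lc + 1 - N.

Let pair_in_drop : pair_in (ctx lc (s :: t) rc) x y.
Proof. by apply: pair_in_ctx; move: xy_inside; rewrite /inside size_rcons /=; lia. Qed.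

Let lt_d_x : 0 < d -> d + K + 1 < x.
Proof. by move: xy_inside; rewrite /inside size_rcons /d; lia. Qed.

Lemma agree_cons :
  agree (ctx lc (s :: t) rc) (ctx (lastn N (rcons lc s)) t rc) x y (x - d) (y - d).
Proof.
rewrite ctx_cons -/d; have [->|d_gt0] := posnP d; first by rewrite drop0 !subn0.
exact: agree_drop pair_in_drop (lt_d_x d_gt0).
Qed.

Lemma goal_fires_cons : goal_fires (ctx lc (s :: t) rc) x y <->
  goal_fires (ctx (lastn N (rcons lc s)) t rc) (x - d) (y - d).
Proof.
rewrite ctx_cons -/d; have [->|d_gt0] := posnP d; first by rewrite drop0 !subn0.
exact: goal_fires_drop pair_in_drop (lt_d_x d_gt0).
Qed.

End Cons.

Lemma edge_fact_rcons lc v z rc a b r : 0 < b ->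
  edge_fact lc (rcons v z) rc a b r <-> edge_fact lc v (take N (z :: rc)) a b.-1 r.
Proof.
move=> b_gt0; rewrite /edge_fact size_rcons.
have [lt_ab|] := ltnP (a + b) (size v).+1; last by split=> -[]; lia.
have -> : size lc + size v - b.-1 = size lc + (size v).+1 - b by lia.
have agr := @agree_rcons lc v z rc (size lc + 1 + a) (size lc + (size v).+1 - b).
by split=> -[_ fact]; (split; first lia); apply/agr => //; rewrite /inside; lia.
Qed.

Lemma edge_fact_cons lc s t rc a b r : 0 < a ->
  edge_fact lc (s :: t) rc a b r <-> edge_fact (lastn N (rcons lc s)) t rc a.-1 b r.
Proof.
move=> a_gt0; rewrite /edge_fact /= size_lastn size_rcons.
have [lt_ab|] := ltnP (a + b) (size t).+1; last by split=> -[]; lia.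
have agr := @agree_cons lc s t rc (size lc + 1 + a) (size lc + (size t).+1 - b).
have -> : minn N (size lc).+1 + 1 + a.-1 = size lc + 1 + a - (size lc + 1 - N) by lia.
have -> : minn N (size lc).+1 + size t - b = size lc + (size t).+1 - b - (size lc + 1 - N).
  by lia.
by split=> -[_ fact]; (split; first lia); apply/agr => //; rewrite /inside size_rcons; lia.
Qed.

Lemma violated_inside_split lc s m z rc :
  violated_inside lc (s :: rcons m z) rc <->
  [\/ violated_inside lc (s :: m) (take N (z :: rc)),
      violated_inside (lastn N (rcons lc s)) (rcons m z) rc |
      goal_fires (ctx lc (s :: rcons m z) rc) (size lc + 1) (size lc + size m + 2)].
Proof.
pose d := size lc + 1 - N.
have size_lc' : size (lastn N (rcons lc s)) = size lc + 1 - d.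
  by rewrite size_lastn size_rcons; lia.
split=> [[x [y []]]|].
  rewrite /inside /= size_rcons => xy_in fires_xy.
  have [lt_y|ge_y] := ltnP y (size lc + size m + 2).
    apply: Or31; exists x, y; split; first by rewrite /inside /=; lia.
    by apply/(goal_fires_rcons (v := s :: m)) => //; rewrite /inside /=; lia.
  have [lt_x|ge_x] := ltnP (size lc + 1) x.
    apply: Or32; exists (x - d), (y - d); rewrite /inside size_lc' size_rcons.
    split; first lia.
    by apply/goal_fires_cons => //; rewrite /inside !size_rcons; lia.
  have -> : size lc + 1 = x by lia.
  have -> : size lc + size m + 2 = y by lia.
  exact: Or33.
have inside_full x y : inside lc (s :: m) x y -> inside lc (s :: rcons m z) x y.
  by rewrite /inside /= size_rcons; lia.
case=> [[x [y [xy_in fires_xy]]]|[x [y []]]|fires_full].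
- exists x, y; split; first exact: inside_full.
  by apply/(goal_fires_rcons (v := s :: m)).
- rewrite /inside size_lc' size_rcons => xy_in.
  have := @goal_fires_cons lc s (rcons m z) rc (x + d) (y + d).
  rewrite !addnK -/d => fires_iff fires_xy; exists (x + d), (y + d).
  split; first by rewrite /inside /= size_rcons; lia.
  by apply/fires_iff => //; rewrite /inside !size_rcons; lia.
- exists (size lc + 1), (size lc + size m + 2).
  by split=> //; rewrite /inside /= size_rcons; lia.
Qed.

End Contexts.

Section FullPair.
Variables (Sigma : finType) (Phi : incl_horn Sigma) (K : nat).
Hypothesis bound_K : offset_bound Phi K.
Local Notation agree := (agree Phi).
Local Notation goal_fires := (goal_fires Phi).
Local Notation edge_fact := (@edge_fact _ Phi).
(* [2 K < M]: at the full pair [(x, y)] of a factor longer than [M], every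
   relational hypothesis [S(x + a, y - b)] has [x + a <= y - b]; and [K + 1 < M]:
   the unary lookups at [x] and [y] stay within the first and last [M] letters. *)
Local Notation M := (K + K + 3).

Variables (lc u u' rc : seq Sigma).
Hypotheses (long_u : M < size u) (long_u' : M < size u').
Hypotheses (same_head : take M u = take M u') (same_tail : lastn M u = lastn M u').
Let W := ctx lc u rc.
Let W' := ctx lc u' rc.
Let size_W : size W = size lc + size u + size rc. Proof. exact: size_ctx. Qed.
Let size_W' : size W' = size lc + size u' + size rc. Proof. exact: size_ctx. Qed.

Lemma take_ctx (v : seq Sigma) : M <= size v -> take (size lc + M) (ctx lc v rc) = lc ++ take M v.
Proof.
move=> long_v; rewrite /ctx take_cat ifF; last by lia.
by rewrite takel_cat; [congr (_ ++ take _ _); lia | lia].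
Qed.

Lemma drop_ctx (v : seq Sigma) : M <= size v ->
  drop (size lc + size v - M) (ctx lc v rc) = lastn M v ++ rc.
Proof.
move=> long_v; rewrite /ctx /lastn drop_cat ifF; last by lia.
by rewrite drop_cat ifT; [congr (drop _ _ ++ _); lia | lia].
Qed.

Lemma upred_sat_full_head U p : p <= size lc + K + 1 -> upred_sat W U p = upred_sat W' U p.
Proof.
move=> le_p; apply: upred_sat_eq => //; last by rewrite size_W size_W'; lia.
rewrite -[LHS](@ifT _ (p.-1 < size lc + M) _ None); last by lia.
rewrite -[RHS](@ifT _ (p.-1 < size lc + M) _ None); last by lia.
by rewrite -!onth_take /W /W' !take_ctx ?same_head //; lia.
Qed.

Lemma upred_sat_full_tail U e : 0 < e ->
  upred_sat W U (size lc + size u - M + e) = upred_sat W' U (size lc + size u' - M + e).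
Proof.
move=> e_gt0; apply: upred_sat_eq; [|lia|by rewrite size_W size_W'; lia].
rewrite !(_ : forall v, (size lc + size v - M + e).-1 = size lc + size v - M + e.-1); try lia.
by rewrite -!onth_drop /W /W' !drop_ctx ?same_tail //; lia.
Qed.

Lemma shift_full_head a : absz a <= K ->
  shift W (size lc + 1) a = shift W' (size lc + 1) a /\ shift W (size lc + 1) a <= size lc + K + 1.
Proof.
case: a => [a|a] le_aK; rewrite /= in le_aK; last by rewrite !shift_Negz; lia.
by rewrite !shift_Posz ?size_W ?size_W'; lia.
Qed.

Lemma shift_full_tail a : absz a <= K -> exists2 e, 0 < e &
  shift W (size lc + size u) a = size lc + size u - M + e /\
  shift W' (size lc + size u') a = size lc + size u' - M + e.
Proof.
case: a => [a|a] le_aK; rewrite /= in le_aK.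
  by exists (M + minn a (size rc)); rewrite ?shift_Posz ?size_W ?size_W'; lia.
by exists (M - a.+1); rewrite ?shift_Negz; lia.
Qed.

Definition full_rel x y x' y' :=
  [/\ x = size lc + 1, y = size lc + size u, x' = size lc + 1 & y' = size lc + size u'].

Hypothesis same_edges : forall a b r, a <= K -> b <= K -> 0 < a + b ->
  edge_fact lc u rc a b r <-> edge_fact lc u' rc a b r.

Lemma matching_full :
  matching K W W' (size lc + 1) (size lc + size u) (size lc + 1) (size lc + size u')
    (fun a b a' b' => full_rel a b a' b' \/ agree W W' a b a' b').
Proof.
split; try lia.
- move=> U a le_aK; have [-> le_pos] := shift_full_head le_aK.
  exact: upred_sat_full_head.
- move=> U a le_aK; have [e e_gt0 [-> ->]] := shift_full_tail le_aK.
  exact: upred_sat_full_tail.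
- by move=> a b le_aK le_bK; rewrite !shift_Posz ?shiftmE ?size_W ?size_W'; lia.
move=> a b le_aK le_bK _.
have -> : shift W (size lc + 1) a = size lc + 1 + a by rewrite shift_Posz ?size_W; lia.
have -> : shift W' (size lc + 1) a = size lc + 1 + a by rewrite shift_Posz ?size_W'; lia.
rewrite !shiftmE; try lia.
rewrite !(_ : forall v, M < size v -> maxn (size lc + size v - b) 1 = size lc + size v - b);
  try lia.
have [ab0|ab_gt0] := posnP (a + b); first by left; split; lia.
right=> r; have [edge edge'] := @same_edges a b r le_aK le_bK ab_gt0.
rewrite /edge_fact in edge edge'.
by split=> least; [case: edge | case: edge'] => //; split=> //; lia.
Qed.

Lemma agree_full : agree W W' (size lc + 1) (size lc + size u) (size lc + 1) (size lc + size u').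
Proof.
apply: (least_interp_bisim bound_K (G := full_rel)); last by [].
move=> x y x' y' [-> -> -> ->]; split; [| |exact: matching_full];
  by rewrite /pair_in ?size_W ?size_W'; lia.
Qed.

Lemma goal_fires_full : goal_fires W (size lc + 1) (size lc + size u) <->
  goal_fires W' (size lc + 1) (size lc + size u').
Proof.
apply: (goal_fires_matching bound_K matching_full).
by move=> a b a' b' [[-> -> -> ->]|]; [apply: agree_full|].
Qed.

End FullPair.

(** * Profiles *)

Section Profile.
Variables (Sigma : finType) (Phi : incl_horn Sigma) (K : nat).
Hypothesis bound_K : offset_bound Phi K.
Local Notation edge_fact := (@edge_fact _ Phi).
Local Notation violated_inside := (violated_inside Phi).
Local Notation N := K.+1.
Local Notation M := (K + K + 3).

Definition profile_type := (M.-bseq Sigma * M.-bseq Sigma *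
  {ffun N.-bseq Sigma * N.-bseq Sigma -> {ffun 'I_(nrel Phi) * 'I_N * 'I_N -> bool} * bool})%type.

(* The finite information about a factor [v] that matters to the least model
   of any word containing it: its two ends, and for every pair of contexts
   of length at most [K + 1], the least-model facts near the ends of [v] and
   whether a goal clause fires inside [v]. *)
Definition profile (v : seq Sigma) : profile_type :=
  (insub_bseq M (take M v), insub_bseq M (lastn M v),
   [ffun c : N.-bseq Sigma * N.-bseq Sigma =>
      ([ffun t : 'I_(nrel Phi) * 'I_N * 'I_N => asbool (edge_fact c.1 v c.2 t.1.2 t.2 t.1.1)],
       asbool (violated_inside c.1 v c.2))]).

Section ProfileEq.
Variables u u' : seq Sigma.
Hypothesis same_profile : profile u = profile u'.

Lemma profile_take : take M u = take M u'.
Proof.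
have := congr1 (fun p : profile_type => p.1.1 : seq Sigma) same_profile.
by rewrite /= !insub_bseqK // size_take_min; lia.
Qed.

Lemma profile_lastn : lastn M u = lastn M u'.
Proof.
have := congr1 (fun p : profile_type => p.1.2 : seq Sigma) same_profile.
by rewrite /= !insub_bseqK // size_lastn; lia.
Qed.

Lemma profile_edge_fact (lc rc : N.-bseq Sigma) a b r : a < N -> b < N ->
  edge_fact lc u rc a b r <-> edge_fact lc u' rc a b r.
Proof.
move=> lt_aN lt_bN.
have := congr1 (fun p : profile_type => (p.2 (lc, rc)).1 (r, Ordinal lt_aN, Ordinal lt_bN))
  same_profile.
by rewrite !ffunE /= => /asbool_eq.
Qed.

Lemma profile_violated_inside (lc rc : N.-bseq Sigma) :
  violated_inside lc u rc <-> violated_inside lc u' rc.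
Proof.
have := congr1 (fun p : profile_type => (p.2 (lc, rc)).2) same_profile.
by rewrite !ffunE /= => /asbool_eq.
Qed.

End ProfileEq.

Lemma profile_ext u u' : take M u = take M u' -> lastn M u = lastn M u' ->
  (forall (lc rc : N.-bseq Sigma) a b r, a < N -> b < N ->
     edge_fact lc u rc a b r <-> edge_fact lc u' rc a b r) ->
  (forall lc rc : N.-bseq Sigma, violated_inside lc u rc <-> violated_inside lc u' rc) ->
  profile u = profile u'.
Proof.
move=> same_take same_lastn same_edges same_violated.
rewrite /profile same_take same_lastn; congr (_, _, _).
apply/ffunP => c; rewrite !ffunE; congr (_, _); last exact/asbool_eq.
by apply/ffunP => t; rewrite !ffunE; apply/asbool_eq/same_edges.
Qed.

Section Glue.
Variables (s z : Sigma) (m m' : seq Sigma).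
Hypothesis same_init : profile (s :: m) = profile (s :: m').
Hypothesis same_tail : profile (rcons m z) = profile (rcons m' z).
Hypothesis long_m : M <= (size m).+1.

Let long_m' : M <= (size m').+1.
Proof. by have := congr1 size (profile_take same_init); rewrite !size_take_min /=; lia. Qed.

Lemma glue_edge_fact (lc rc : N.-bseq Sigma) a b r : a <= K -> b <= K -> 0 < a + b ->
  edge_fact lc (s :: rcons m z) rc a b r <-> edge_fact lc (s :: rcons m' z) rc a b r.
Proof.
move=> le_aK le_bK ab_gt0; have [b0|b_gt0] := posnP b.
  have a_gt0 : 0 < a by lia.
  rewrite !(edge_fact_cons bound_K _ _ _ _ _ _ a_gt0).
  have := profile_edge_fact same_tail (insub_bseq N (lastn N (rcons lc s))) rc r.
  by rewrite insub_bseqK ?size_lastn; [apply; lia | lia].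
rewrite -!rcons_cons !(edge_fact_rcons bound_K _ _ _ _ _ _ b_gt0).
have := profile_edge_fact same_init lc (insub_bseq N (take N (z :: rc))) r.
by rewrite insub_bseqK ?size_take_min; [apply; lia | lia].
Qed.

Let long_u : M < size (s :: rcons m z). Proof. by rewrite /= size_rcons; lia. Qed.
Let long_u' : M < size (s :: rcons m' z). Proof. by rewrite /= size_rcons; lia. Qed.

Let same_take : take M (s :: rcons m z) = take M (s :: rcons m' z).
Proof. by rewrite !take_cons_rcons // (profile_take same_init). Qed.

Let same_lastn : lastn M (s :: rcons m z) = lastn M (s :: rcons m' z).
Proof. by rewrite !lastn_cons_rcons // (profile_lastn same_tail). Qed.

Lemma glue_violated_inside (lc rc : N.-bseq Sigma) :
  violated_inside lc (s :: rcons m z) rc <-> violated_inside lc (s :: rcons m' z) rc.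
Proof.
rewrite !(violated_inside_split bound_K).
have := profile_violated_inside same_init lc (insub_bseq N (take N (z :: rc))).
rewrite insub_bseqK ?size_take_min; last by lia.
have := profile_violated_inside same_tail (insub_bseq N (lastn N (rcons lc s))) rc.
rewrite insub_bseqK ?size_lastn; last by lia.
have := goal_fires_full bound_K long_u long_u' same_take same_lastn (@glue_edge_fact lc rc).
rewrite /= !size_rcons !addnS !addn0.
move=> full tail init.
by split=> -[/init|/tail|/full] h; by [apply: Or31 | apply: Or32 | apply: Or33].
Qed.

Lemma profile_glue_long : profile (s :: rcons m z) = profile (s :: rcons m' z).
Proof.
apply: profile_ext same_take same_lastn _ glue_violated_inside => lc rc a b r lt_aN lt_bN.
have [ab0|ab_gt0] := posnP (a + b); last by apply: glue_edge_fact; lia.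
have [-> ->] : a = 0 /\ b = 0 by lia.
have := agree_full bound_K long_u long_u' same_take same_lastn (@glue_edge_fact lc rc) r.
by rewrite /edge_fact !addn0 !subn0 => full; split=> -[_ /full]; split.
Qed.

End Glue.

Lemma profile_glue s s' m m' z z' :
  profile (s :: m) = profile (s' :: m') -> profile (rcons m z) = profile (rcons m' z') ->
  profile (s :: rcons m z) = profile (s' :: rcons m' z').
Proof.
move=> same_init same_tail.
have same_take := profile_take same_init; have same_lastn := profile_lastn same_tail.
have [short|long] := ltnP (size (s :: m)) M.
  move: same_lastn; have [<- <-] := take_eq_short same_take short.
  rewrite !lastn_oversize ?size_rcons ?(ltnW short) //.
  by case/rcons_inj=> ->.
have [eq_s _] : s = s' /\ take (K + K + 2) m = take (K + K + 2) m'.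
  by move: same_take; rewrite (addnS (K + K) 2) /= => -[].
have eq_z : z = z'.
  move: same_lastn; rewrite /lastn !size_rcons !drop_rcons; try lia.
  by case/rcons_inj.
by subst s' z'; apply: profile_glue_long.
Qed.

End Profile.

(** * Trellis automata computing profiles *)

Section ProfileAutomaton.
Variables (Sigma P : finType) (prof : seq Sigma -> P).
Hypothesis prof_glue : forall s s' m m' z z',
  prof (s :: m) = prof (s' :: m') -> prof (rcons m z) = prof (rcons m' z') ->
  prof (s :: rcons m z) = prof (s' :: rcons m' z').
Variable accept : pred P.

(* Arbitrary on pairs that are not the profiles of some [s m] and [m z]. *)
Definition glue_profiles (p1 p2 : P) : P :=
  epsilon (inhabits (prof [::])) (fun p =>
    exists s m z, [/\ prof (s :: m) = p1, prof (rcons m z) = p2 & prof (s :: rcons m z) = p]).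

Lemma glue_profilesE s m z :
  glue_profiles (prof (s :: m)) (prof (rcons m z)) = prof (s :: rcons m z).
Proof.
rewrite /glue_profiles; set G := (fun p => _).
have : G (epsilon (inhabits (prof [::])) G).
  by apply: epsilon_spec; exists (prof (s :: rcons m z)), s, m, z.
by case=> s' [m' [z' [same_init same_tail <-]]]; apply: prof_glue.
Qed.

(* A state is either an input letter or the profile of the factor the cell has
   read so far; [None] is the border state. *)
Definition decode (q : option (Sigma + P)) : P :=
  match q with
  | Some (inl s) => prof [:: s]
  | Some (inr p) => p
  | None => prof [::]
  end.

Lemma inl_letter_inj : injective (fun s : Sigma => Some (@inl Sigma P s)).
Proof. by move=> s s' [<-]. Qed.

Definition profile_oca : OCA Sigma :=
  @MkOCA Sigma (option (Sigma + P) : finType) _ inl_letter_inj (fun q => accept (decode q))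
    None (fun q q' => Some (inr (glue_profiles (decode q) (decode q')))).

Lemma cfg_profile_oca (w : seq Sigma) t c : t < c <= size w ->
  decode (cfg profile_oca w t c) = prof (factor w (c - t).-1 c).
Proof.
elim: t c => [|t IH] c bounds; rewrite /= /in_dom ifT; try lia.
  case E: (onth w c.-1) => [s|]; last by move: (onthNE w c.-1); rewrite E /=; lia.
  by rewrite /= subn0 -(factor_single E) prednK //; lia.
rewrite /= !IH; try lia.
have [i [-> -> -> lt_ic len_i]] : exists i, [/\ (c.-1 - t).-1 = i, (c - t).-1 = i.+1,
    (c - t.+1).-1 = i, i < c & c - i = t.+2].
  by exists (c - t.+1).-1; split; lia.
rewrite factor_behead (factor_belast w lt_ic) len_i.
have : size (factor w i c) = t.+2 by rewrite size_factor; lia.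
case: (factor w i c) => [|s u] //; case/lastP: u => [|m z] //=.
rewrite size_rcons => -[<-].
by rewrite -cats1 take_size_cat // cats1 glue_profilesE.
Qed.

Lemma profile_oca_accepts (w : seq Sigma) :
  w <> [::] -> oca_accepts profile_oca w = accept (prof w).
Proof.
move=> w_nil; have w_gt0 : 0 < size w by case: w w_nil.
rewrite /oca_accepts /= cfg_profile_oca; last by lia.
by rewrite (_ : (size w - (size w).-1).-1 = 0) ?/factor ?drop0 ?take_size //; lia.
Qed.

End ProfileAutomaton.

Lemma trellis_of_profile (Sigma P : finType) (prof : seq Sigma -> P) (L : language Sigma) :
  (forall s s' m m' z z', prof (s :: m) = prof (s' :: m') ->
     prof (rcons m z) = prof (rcons m' z') -> prof (s :: rcons m z) = prof (s' :: rcons m' z')) ->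
  (forall u u', u <> [::] -> u' <> [::] -> prof u = prof u' -> L u -> L u') ->
  ~ L [::] -> Trellis L.
Proof.
move=> prof_glue L_prof L_nil; split=> //.
exists (profile_oca prof (fun p => asbool (exists2 u, u <> [::] & prof u = p /\ L u))).
move=> w w_nil; rewrite profile_oca_accepts //.
split=> [Lw|/asboolP[u u_nil [same_prof Lu]]]; first by apply/asboolP; exists w.
exact: L_prof same_prof Lu.
Qed.

(** * Trellis automata as inclusion Horn formulas *)

Lemma cfg_step (Sigma : finType) (A : OCA Sigma) (w : seq Sigma) t c : in_dom w c ->
  cfg A w t.+1 c = delta (cfg A w t c.-1) (cfg A w t c).
Proof. by move=> c_in; rewrite /= c_in. Qed.

Section HornOfOca.
Variables (Sigma : finType) (A : OCA Sigma).
Local Notation Q := (state A).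
Local Notation k := #|Q|.
Local Notation code := (@enum_rank Q).

Definition input_clause (s : Sigma) : hclause Sigma k :=
  HClause [:: @LEq Sigma k; LX k (UQ s) 0 true] (Some (code (inp A s))).

Definition step_clause (p q : Q) : hclause Sigma k :=
  HClause [:: @LLt Sigma k; LRel Sigma (code p) 0 1; LRel Sigma (code q) 1 0]
    (Some (code (delta p q))).

Definition reject_clause (q : Q) : hclause Sigma k :=
  HClause [:: LX k (@Umin Sigma) 0 true; LY k (@Umax Sigma) 0 true; LRel Sigma (code q) 0 0]
    None.

Definition horn_of_oca : incl_horn Sigma := InclHorn
  (List.map input_clause (enum Sigma) ++
   List.flat_map (fun p => List.map (step_clause p) (enum Q)) (enum Q) ++
   List.map reject_clause [seq q <- enum Q | ~~ accepting q]).

Lemma horn_of_ocaP c : List.In c (clauses horn_of_oca) ->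
  [\/ exists s, c = input_clause s, exists p q, c = step_clause p q |
      exists2 q, c = reject_clause q & ~~ accepting q].
Proof.
rewrite /= !List.in_app_iff => -[|[]].
- by case/List.in_map_iff=> s [<- _]; apply: Or31; exists s.
- by case/List.in_flat_map=> p [_ /List.in_map_iff[q [<- _]]]; apply: Or32; exists p, q.
- by case/List.in_map_iff=> q [<- /List.filter_In[_ q_rej]]; apply: Or33; exists q.
Qed.

Lemma input_clause_in s : List.In (input_clause s) (clauses horn_of_oca).
Proof. by rewrite /= !List.in_app_iff; left; apply/List.in_map/In_mem; rewrite mem_enum. Qed.

Lemma step_clause_in p q : List.In (step_clause p q) (clauses horn_of_oca).
Proof.
rewrite /= !List.in_app_iff; right; left; apply/List.in_flat_map; exists p.
by split; [|apply: List.in_map]; apply: In_mem; rewrite mem_enum.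
Qed.

Lemma reject_clause_in q : ~~ accepting q -> List.In (reject_clause q) (clauses horn_of_oca).
Proof.
move=> q_rej; rewrite /= !List.in_app_iff; right; right; apply: List.in_map.
by apply/List.filter_In; split=> //; apply: In_mem; rewrite mem_enum.
Qed.

Section Sound.
Variables (w : seq Sigma) (R : 'I_k -> nat -> nat -> Prop).
Hypothesis R_sat : forall x y, in_dom w x -> in_dom w y ->
  forall c, List.In c (clauses horn_of_oca) -> hclause_sat w R x y c.

Lemma run_sat d x : 0 < x -> x + d <= size w -> R (code (cfg A w d (x + d))) x (x + d).
Proof.
elim: d x => [|d IH] x x_gt0 le_xw.
  rewrite addn0 in le_xw *; have x_in : in_dom w x by rewrite /in_dom; lia.
  case E: (onth w x.-1) => [s|]; last by move: (onthNE w x.-1); rewrite E /=; lia.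
  have := R_sat x_in x_in (input_clause_in s) (leqnn x); rewrite /= x_in E.
  by apply=> l /= [<-|[<-|[]]] //=; rewrite /pol E.
have x_in : in_dom w x by rewrite /in_dom; lia.
have y_in : in_dom w (x + d.+1) by rewrite /in_dom; lia.
have := R_sat x_in y_in (step_clause_in (cfg A w d (x + d)) (cfg A w d (x + d.+1))).
rewrite /hclause_sat /= y_in (_ : (x + d.+1).-1 = x + d); last by lia.
apply; first by lia.
move=> l /= [<-|[<-|[<-|[]]]] /=; first by lia.
  by rewrite /prd (_ : maxn (x + d.+1).-1 1 = x + d); [split; [apply: IH|]|]; lia.
rewrite /suc (_ : minn x.+1 (size w) = x + 1); last by lia.
by rewrite (_ : x + d.+1 = x + 1 + d); [split; [apply: IH|]|]; lia.
Qed.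

Lemma accepting_of_sat : 0 < size w -> oca_accepts A w.
Proof.
move=> w_gt0; apply/negPn/negP => w_rej.
have one_in : in_dom w 1 by rewrite /in_dom; lia.
have n_in : in_dom w (size w) by rewrite /in_dom; lia.
have := R_sat one_in n_in (reject_clause_in w_rej); rewrite /hclause_sat /=.
apply; first by lia.
have run : R (code (cfg A w (size w).-1 (size w))) 1 (size w).
  by have := @run_sat (size w).-1 1; rewrite (_ : 1 + (size w).-1 = size w); [apply; lia | lia].
by move=> l [<-|[<-|[<-|[]]]]; rewrite /= /pol //; split.
Qed.

End Sound.

Definition run_interp (w : seq Sigma) : 'I_k -> nat -> nat -> Prop :=
  fun q x y => cfg A w (y - x) y = enum_val q.

Lemma run_interp_sat (w : seq Sigma) x y c : oca_accepts A w ->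
  in_dom w x -> in_dom w y -> List.In c (clauses horn_of_oca) ->
  hclause_sat w (run_interp w) x y c.
Proof.
rewrite /in_dom => w_acc x_in y_in /horn_of_ocaP[[s ->]|[p [q ->]]|[q -> q_rej]] le_xy sat;
  rewrite /= in sat *.
- have <- : x = y by apply: (sat (@LEq Sigma k)); left.
  have /eqP x_s := sat _ (or_intror (or_introl erefl)).
  by rewrite /run_interp enum_rankK subnn /= /in_dom x_in x_s.
- have lt_xy : x < y by apply: (sat (@LLt Sigma k)); left.
  have [run_p _] := sat _ (or_intror (or_introl erefl)).
  have [run_q _] := sat _ (or_intror (or_intror (or_introl erefl))).
  move: run_p run_q; rewrite /run_interp /= !enum_rankK /prd /suc.
  have -> : maxn y.-1 1 = y.-1 by lia.
  have -> : minn x.+1 (size w) = x.+1 by lia.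
  have -> : y - x = (y - x.+1).+1 by lia.
  have -> : y.-1 - x = y - x.+1 by lia.
  by rewrite cfg_step => [-> -> //|]; rewrite /in_dom; lia.
have /eqP x1 : x == 1 := sat _ (or_introl erefl).
have /eqP yn : y == size w := sat _ (or_intror (or_introl erefl)).
have [run_q _] := sat _ (or_intror (or_intror (or_introl erefl))).
move: run_q w_acc; rewrite /run_interp /= enum_rankK x1 yn /oca_accepts subn1 => ->.
by rewrite (negbTE q_rej).
Qed.

Lemma models_horn_of_oca (w : seq Sigma) : w <> [::] ->
  (models w horn_of_oca <-> oca_accepts A w).
Proof.
move=> w_nil; have w_gt0 : 0 < size w by case: w w_nil.
split=> [[R R_sat]|w_acc]; first exact: accepting_of_sat R_sat w_gt0.
by exists (run_interp w) => x y x_in y_in c; apply: run_interp_sat.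
Qed.

End HornOfOca.

Lemma models_no_violation (Sigma : finType) (Phi : incl_horn Sigma) (w : seq Sigma) :
  models w Phi <-> ~ violated_inside Phi [::] w [::].
Proof.
rewrite models_least_interp /violated_inside /ctx cats0; split.
  by move=> no_fire [x [y [xy_in]]]; apply: no_fire; move: xy_in; rewrite /inside /pair_in.
by move=> no_violation x y xy_in fires; apply: no_violation; exists x, y.
Qed.

Theorem theorem4 (Sigma : finType) (L : language Sigma) :
  inclESOHORN L <-> Trellis L.
Proof.
split=> [[L_nil [Phi L_Phi]]|[L_nil [A L_A]]].
  have [K bound_K] := offset_bound_exists Phi.
  apply: (trellis_of_profile (profile_glue bound_K)) L_nil => u u' u_nil u'_nil same_prof.
  rewrite (L_Phi u u_nil) (L_Phi u' u'_nil) !models_no_violation.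
  by apply: contra_not => /(profile_violated_inside same_prof (nil_bseq _ _) (nil_bseq _ _)).
split=> //; exists (horn_of_oca A) => w w_nil.
exact: iff_trans (L_A w w_nil) (iff_sym (models_horn_of_oca A w_nil)).
Qed.
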